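(* Let $K_h, M_h, W_h, D_h\in\mathbb{R}^{N_h\times N_h}$, $y_d,f\in\mathbb{R}^{N_h}$, $\alpha>0$, $\delta>0$, $a,b\in\mathbb{R}$, $c_n$ and $\sigma$ be as described in the context, and let $$F(p,\lambda,\mu)=\tfrac12\|K_h^Tp+\lambda-M_hy_d\|_{M_h^{-1}}^2+\tfrac{1}{2\alpha}\|M_hp-\mu\|_{M_h^{-1}}^2+\delta^*_{\mathcal{C}}(\lambda)+\delta^*_{\mathcal{S}}(\mu)+(M_hf,p)-\tfrac12\|y_d\|_{M_h}^2$$ for $p,\lambda,\mu\in\mathbb{R}^{N_h}$, with $\phi(p,\lambda,\mu)=\tfrac12\|K_h^Tp+\lambda-M_hy_d\|_{M_h^{-1}}^2+\tfrac{1}{2\alpha}\|M_hp-\mu\|_{M_h^{-1}}^2-\tfrac12\|y_d\|_{M_h}^2$. Consider the following algorithm (FE-dABCD). Input: $(p^1,\lambda^1,\mu^1)=(\tilde p^0,\tilde\lambda^0,\tilde\mu^0)\in\mathbb{R}^{N_h}\times\mathrm{dom}(\delta^*_{\mathcal{C}})\times\mathrm{dom}(\delta^*_{\mathcal{S}})$, a sequence of nonnegative numbers $\{\epsilon_k\}$ with $\sum_{k=1}^\infty k\epsilon_k<\infty$, $t_1=1$. For $k=1,2,\dots$: Step 1: choose error vectors $\delta_p^k,\delta_\lambda^k,\delta_\mu^k\in\mathbb{R}^{N_h}$ with $\max\{\|\delta_p^k\|,\|\delta_\lambda^k\|,\|\delta_\mu^k\|\}\le\epsilon_k$, and compute \begin{align*}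 \tilde p^k&=\arg\min_p\big\{(M_hf,p)+\phi(p,\lambda^k,\mu^k)-\langle\delta_p^k,p\rangle\big\},\\ \tilde\lambda^k&=\arg\min_\lambda\big\{\delta^*_{\mathcal{C}}(\lambda)+\tfrac12\|\lambda-M_hy_d+K_h^T\tilde p^k\|_{M_h^{-1}}^2+\tfrac12\|\lambda-\lambda^k\|_{\sigma I-M_h^{-1}}^2-\langle\delta_\lambda^k,\lambda\rangle\big\},\\ \tilde\mu^k&=\arg\min_\mu\big\{\delta^*_{\mathcal{S}}(\mu)+\tfrac{1}{2\alpha}\|\mu-M_h\tilde p^k\|_{M_h^{-1}}^2+\tfrac{1}{2\alpha}\|\mu-\mu^k\|_{c_nW_h^{-1}-M_h^{-1}}^2-\langle\delta_\mu^k,\mu\rangle\big\}; \end{align*} Step 2: set $t_{k+1}=\frac{1+\sqrt{1+4t_k^2}}{2}$, $\beta_k=\frac{t_k-1}{t_{k+1}}$, and $p^{k+1}=\tilde p^k+\beta_k(\tilde p^k-\tilde p^{k-1})$, $\lambda^{k+1}=\tilde\lambda^k+\beta_k(\tilde\lambda^k-\tilde\lambda^{k-1})$, $\mu^{k+1}=\tilde\mu^k+\beta_k(\tilde\mu^k-\tilde\mu^{k-1})$. Let $\tilde z^k=(\tilde p^k,\tilde\lambda^k,\tilde\mu^k)$ be the generated sequence and let $z^*$ be a minimizer of $F$. Then there is a constant $c_0$ such that $$F(\tilde z^k)-F(z^* )\le\frac{2\|\tilde z^0-z^*\|_{\mathscr{S}}^2+c_0}{(k+1)^2}\qquad\forall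 k\ge1,$$ where $\mathscr{S}=\mathrm{Diag}(\mathcal{D}_1,\mathcal{D}_2+\mathcal{Q}_{22})$ with $\mathcal{D}_1=0$, $\mathcal{D}_2=\mathrm{Diag}\big(\sigma I-M_h^{-1},\ \tfrac1\alpha(c_nW_h^{-1}-M_h^{-1})\big)$, $\mathcal{Q}_{22}=\mathrm{Diag}\big(M_h^{-1},\tfrac1\alpha M_h^{-1}\big)$.
   Context: Setting: $\Omega\subset\mathbb{R}^n$ ($n=2,3$) is an open bounded convex polygonal/polyhedral domain (or approximated by $\Omega_h$), with a regular, quasi-uniform family of triangulations; $\phi_1,\dots,\phi_{N_h}$ are the nodal basis functions of continuous piecewise linear finite elements vanishing on the boundary. $K_h=(a(\phi_i,\phi_j))_{i,j}$ is the stiffness matrix of the bilinear form $a(y,v)=\int_\Omega(\sum_{i,j}a_{ij}y_{x_i}v_{x_j}+c_0yv)dx$ of a uniformly elliptic operator (symmetric positive definite), $M_h=(\int_{\Omega_h}\phi_i\phi_j dx)_{i,j}$ is the mass matrix, $W_h=\mathrm{diag}(\int_{\Omega_h}\phi_i dx)_{i}$ is the lumped mass matrix, and $D_h=\sum_{j=1}^n\big(\int_{\Omega_h}\partial_{x_j}\phi_i\,\partial_{x_j}\phi_l\,dx\big)_{i,l}$. $y_d,f\in\mathbb{R}^{N_h}$ are nodal values of given data. $\mathcal{C}=\{z\in\mathbb{R}^{N_h}: z^TD_hz\le\delta\}$, $\mathcal{S}=\{z\in\mathbb{R}^{N_h}: a\le z\le b \text{ componentwise}\}$. For a closed convex set $B$,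 $\delta^*_B(y)=\sup_{x\in B}(y,x)$ is its support function (the conjugate of the indicator function of $B$). $\|x\|_G^2=x^TGx$ and $(\cdot,\cdot)$, $\langle\cdot,\cdot\rangle$ denote the Euclidean inner product. $c_n=4$ if $n=2$ and $c_n=5$ if $n=3$ (so that $\|z\|_{M_h}^2\le\|z\|_{W_h}^2\le c_n\|z\|_{M_h}^2$), and $\sigma=c_n\omega_m$ where $\omega_m$ is the inverse of the smallest diagonal entry of $W_h$, so that $\sigma I-M_h^{-1}\succeq0$ and $c_nW_h^{-1}-M_h^{-1}\succeq0$. *)

From HB Require Import structures.
From mathcomp Require Import all_boot all_order all_algebra.
From mathcomp Require Import all_classical all_reals all_analysis.
Set Implicit Arguments. Unset Strict Implicit. Unset Printing Implicit Defensive.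
Import Order.TTheory GRing.Theory Num.Theory.
Local Open Scope ring_scope.

Section FE.
Variable R : realType.
Variable N : nat.
Notation vec := 'cV[R]_N.
Notation mat := 'M[R]_N.

Definition dot (x y : vec) : R := (x^T *m y) 0 0.
Definition qf (G : mat) (x : vec) : R := (x^T *m G *m x) 0 0.
Definition enorm (x : vec) : R := Num.sqrt (dot x x).

Definition ellC (D : mat) (del : R) : set vec := [set z | qf D z <= del].
Definition boxS (a b : R) : set vec := [set z | forall i, a <= z i 0 <= b].

Definition supp (B : set vec) (y : vec) : \bar R :=
  ereal_sup [set (dot y x)%:E | x in B].
Definition supp_dom (B : set vec) : set vec := [set y | (supp B y < +oo)%E].

Definition symmx (A : mat) : Prop := A^T = A.
Definition posdef (A : mat) : Prop := forall x : vec, x != 0 -> 0 < qf A x.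
Definition possemidef (A : mat) : Prop := forall x : vec, 0 <= qf A x.

Definition phi (K M : mat) (yd : vec) (alpha : R) (p l m : vec) : R :=
  1/2 * qf (invmx M) (K^T *m p + l - M *m yd)
  + 1/(2 * alpha) * qf (invmx M) (M *m p - m)
  - 1/2 * qf M yd.

Definition Fobj (K M D : mat) (yd f : vec) (alpha del a b : R) (p l m : vec)
  : \bar R :=
  ((phi K M yd alpha p l m + dot (M *m f) p)%:E
   + supp (ellC D del) l + supp (boxS a b) m)%E.

End FE.

(* t_k = tacc (k-1):  t_1 = 1,  t_{k+1} = (1 + sqrt(1 + 4 t_k^2)) / 2 *)
Fixpoint tacc {R : realType} (j : nat) : R :=
  match j with
  | 0%N => 1
  | j'.+1 => (1 + Num.sqrt (1 + 4 * (tacc j') ^+ 2)) / 2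
  end.
Definition tk {R : realType} (k : nat) : R := tacc k.-1.
Definition betak {R : realType} (k : nat) : R := (tk k - 1) / tk k.+1.

(* Write [Phi] for the smooth part of F. The p-subproblem minimises [Phi]
   exactly (up to the error [dp]); the lambda- and mu-subproblems minimise
   majorisations of [Phi] whose proximal operators [sigma I - M^-1] and
   [cn W^-1 - M^-1] are positive semidefinite, which is what the choices of
   [sigma] and [cn] guarantee. Each sweep therefore satisfies a one-step
   inequality comparing F at the new iterate with F at any feasible point,
   with proximal measure [sigma |lambda|^2 + cn / alpha |mu|_(W^-1)^2].
   Evaluating it at [t_k^-1 z* + (1 - t_k^-1) zhat], where the p-component of
   [zhat] is the exact minimiser of [Phi] at the previous (lambda, mu) because
   the p-block carries no proximal term, and using
   [t_(k+1)^2 - t_(k+1) = t_k^2], gives a Lyapunov recursion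
   [E_(k+1) <= E_k + C lam_(k+1) (lam_(k+1) + sqrt E_k + sqrt E_(k+1))] with
   [lam_k = t_k eps_k]. Since [t_k <= k], the [lam_k] are summable, a discrete
   Gronwall argument bounds [E_k], and [t_k >= (k + 1) / 2] turns the bound
   into the O(1/(k+1)^2) rate. *)

From HB Require Import structures.
From mathcomp Require Import all_boot all_order all_algebra.
From mathcomp Require Import all_classical all_reals all_analysis.
From mathcomp Require Import ring lra.
Import Order.TTheory GRing.Theory Num.Theory numFieldNormedType.Exports.
Local Open Scope classical_set_scope.
Local Open Scope ring_scope.

Section InnerProduct.
Context {R : realType} {N : nat}.
Implicit Types (x y z : 'cV[R]_N) (A G : 'M[R]_N).

Lemma dotE x y : dot x y = \sum_i x i 0 * y i 0.
Proof. by rewrite /dot !mxE; apply: eq_bigr => i _; rewrite !mxE. Qed.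

Lemma dot_self_sum x : dot x x = \sum_i x i 0 ^+ 2.
Proof. by rewrite dotE; apply: eq_bigr => i _; rewrite expr2. Qed.

Lemma dotC x y : dot x y = dot y x.
Proof. by rewrite !dotE; apply: eq_bigr => i _; rewrite mulrC. Qed.

Lemma dotDl x y z : dot (x + y) z = dot x z + dot y z.
Proof. by rewrite !dotE -big_split; apply: eq_bigr => i _; rewrite !mxE mulrDl. Qed.

Lemma dotZl (c : R) x y : dot (c *: x) y = c * dot x y.
Proof. by rewrite !dotE mulr_sumr; apply: eq_bigr => i _; rewrite !mxE mulrA. Qed.

Lemma dotNl x y : dot (- x) y = - dot x y.
Proof. by rewrite -scaleN1r dotZl mulN1r. Qed.

Lemma dotBl x y z : dot (x - y) z = dot x z - dot y z.
Proof. by rewrite dotDl dotNl. Qed.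

Lemma dotDr x y z : dot z (x + y) = dot z x + dot z y.
Proof. by rewrite dotC dotDl !(dotC z). Qed.

Lemma dotZr (c : R) x y : dot y (c *: x) = c * dot y x.
Proof. by rewrite dotC dotZl dotC. Qed.

Lemma dotNr x y : dot y (- x) = - dot y x.
Proof. by rewrite dotC dotNl dotC. Qed.

Lemma dotBr x y z : dot z (x - y) = dot z x - dot z y.
Proof. by rewrite dotDr dotNr. Qed.

Lemma dot0l x : dot 0 x = 0.
Proof. by rewrite -(scale0r 0) dotZl mul0r. Qed.

Lemma dot0r x : dot x 0 = 0.
Proof. by rewrite dotC dot0l. Qed.

Lemma dot_mulmxr x A y : dot x (A *m y) = dot (A^T *m x) y.
Proof. by rewrite /dot trmx_mul trmxK mulmxA. Qed.

Lemma dot_symmx A x y : symmx A -> dot x (A *m y) = dot y (A *m x).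
Proof. by move=> sA; rewrite dot_mulmxr sA dotC. Qed.

Lemma dot_selfD x y : dot (x + y) (x + y) = dot x x + 2 * dot x y + dot y y.
Proof. by rewrite dotDl !dotDr (dotC y x); ring. Qed.

Lemma dot_self_ge0 x : 0 <= dot x x.
Proof. by rewrite dotE; apply: sumr_ge0 => i _; rewrite -expr2 sqr_ge0. Qed.

Lemma dot_self_eq0 x : dot x x = 0 -> x = 0.
Proof.
rewrite dotE => x0; apply/matrixP => i j; rewrite mxE (ord1 j).
have sq_ge0 (k : 'I_N) : true -> 0 <= x k 0 * x k 0 by rewrite -expr2 sqr_ge0.
have /eqP := psumr_eq0P sq_ge0 x0 isT (i := i).
by rewrite mulf_eq0 orbb => /eqP.
Qed.

Lemma dot_inj x y : (forall d, dot x d = dot y d) -> x = y.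
Proof.
move=> xy; apply/eqP; rewrite -subr_eq0; apply/eqP; apply: dot_self_eq0.
by rewrite dotBl xy subrr.
Qed.

Lemma qfE G x : qf G x = dot x (G *m x).
Proof. by rewrite /qf /dot mulmxA. Qed.

Lemma qf_addmx G1 G2 x : qf (G1 + G2) x = qf G1 x + qf G2 x.
Proof. by rewrite !qfE mulmxDl dotDr. Qed.

Lemma qf_submx G1 G2 x : qf (G1 - G2) x = qf G1 x - qf G2 x.
Proof. by rewrite !qfE mulmxBl dotBr. Qed.

Lemma qf_scalemx (c : R) G x : qf (c *: G) x = c * qf G x.
Proof. by rewrite !qfE -scalemxAl dotZr. Qed.

Lemma qf_scalar_mx (c : R) x : qf c%:M x = c * dot x x.
Proof. by rewrite qfE mul_scalar_mx dotZr. Qed.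

Lemma qfD G x y : symmx G -> qf G (x + y) = qf G x + 2 * dot x (G *m y) + qf G y.
Proof. by move=> sG; rewrite !qfE mulmxDr !dotDl !dotDr (dot_symmx G y x sG); ring. Qed.

Lemma qfZ G (c : R) x : qf G (c *: x) = c ^+ 2 * qf G x.
Proof. by rewrite !qfE -scalemxAr dotZl dotZr mulrA expr2. Qed.

Lemma qfN G x : qf G (- x) = qf G x.
Proof. by rewrite -scaleN1r qfZ sqrrN expr1n mul1r. Qed.

Lemma enorm_ge0 x : 0 <= enorm x.
Proof. exact: sqrtr_ge0. Qed.

Lemma sqr_enorm x : enorm x ^+ 2 = dot x x.
Proof. by rewrite /enorm sqr_sqrtr // dot_self_ge0. Qed.

Lemma normr_coord_le x i : `|x i 0| <= enorm x.
Proof.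
rewrite /enorm -sqrtr_sqr; apply: ler_wsqrtr.
rewrite dotE (bigD1 i) //= -expr2 lerDl; apply: sumr_ge0 => j _.
by rewrite -expr2 sqr_ge0.
Qed.

Definition mx_abs_sum A : R := \sum_i \sum_j `|A i j|.

Lemma mx_abs_sum_ge0 A : 0 <= mx_abs_sum A.
Proof. by apply: sumr_ge0 => i _; apply: sumr_ge0. Qed.

Lemma normr_dot_mulmx_le x A y :
  `|dot x (A *m y)| <= mx_abs_sum A * enorm x * enorm y.
Proof.
rewrite dotE /mx_abs_sum !mulr_suml.
apply: le_trans (ler_norm_sum _ _ _) _; apply: ler_sum => i _.
rewrite !mxE normrM.
have row_le : `|\sum_j A i j * y j 0| <= (\sum_j `|A i j|) * enorm y.
  rewrite mulr_suml; apply: le_trans (ler_norm_sum _ _ _) _; apply: ler_sum => j _.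
  by rewrite normrM; apply: ler_wpM2l => //; apply: normr_coord_le.
apply: le_trans (ler_wpM2l (normr_ge0 _) row_le) _.
rewrite [_ * enorm x]mulrC -mulrA.
apply: ler_wpM2r; first by rewrite mulr_ge0 ?enorm_ge0 // sumr_ge0.
exact: normr_coord_le.
Qed.

Lemma normr_dot_le x y : `|dot x y| <= N%:R * enorm x * enorm y.
Proof.
have sum1 : mx_abs_sum (1%:M : 'M[R]_N) = N%:R.
  rewrite /mx_abs_sum -[X in _ = X%:R](card_ord N) -sumr_const; apply: eq_bigr => i _.
  rewrite (bigD1 i) //= big1 ?addr0 => [|j /negPf ji]; first by rewrite mxE eqxx normr1.
  by rewrite mxE eq_sym ji normr0.
by rewrite -{1}[y]mul1mx -sum1 normr_dot_mulmx_le.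
Qed.

Lemma scaled_dot_le {x} y {e t : R} : 0 <= t -> enorm x <= e ->
  t * dot x y <= N%:R * (t * e) * enorm y.
Proof.
move=> t_ge0 x_le; rewrite mulrCA -mulrA; apply: ler_wpM2l => //.
apply: le_trans (ler_norm _) (le_trans (normr_dot_le x y) _).
by rewrite -!mulrA ler_wpM2l // ler_wpM2r ?enorm_ge0.
Qed.

End InnerProduct.

Section DefiniteMatrices.
Context {R : realType} {N : nat}.
Implicit Types (x : 'cV[R]_N) (A G : 'M[R]_N).

Lemma posdef_qf_eq0 A x : posdef A -> qf A x = 0 -> x = 0.
Proof.
move=> pA Ax0; apply/eqP; apply/negP => /negP x_neq0.
by have := pA x x_neq0; rewrite Ax0 ltxx.
Qed.

Lemma posdef_semidef A : posdef A -> possemidef A.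
Proof.
move=> pA x; case: (eqVneq x 0) => [->|x_neq0]; last exact/ltW/pA.
by rewrite qfE mulmx0 dot0r.
Qed.

Lemma posdef_unitmx A : symmx A -> posdef A -> A \in unitmx.
Proof.
move=> sA pA; rewrite -row_free_unit -kermx_eq0; apply/eqP.
apply/row_matrixP => i; rewrite row0.
set v := (row i (kermx A))^T.
have Av0 : A *m v = 0.
  have vA0 : row i (kermx A) *m A = 0 by rewrite -row_mul mulmx_ker row0.
  by rewrite /v -{1}sA -trmx_mul vA0 trmx0.
have : v = 0 by apply: (posdef_qf_eq0 _ _ pA); rewrite qfE Av0 dot0r.
by move/(congr1 trmx); rewrite /v trmxK trmx0.
Qed.

Lemma symmx_invmx A : symmx A -> symmx (invmx A).
Proof. by move=> sA; rewrite /symmx trmx_inv sA. Qed.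

Lemma qf_invmx A x : A \in unitmx -> qf (invmx A) x = qf A (invmx A *m x).
Proof. by move=> uA; rewrite !qfE mulKVmx // dotC. Qed.

Lemma possemidef_invmx A : A \in unitmx -> possemidef A -> possemidef (invmx A).
Proof. by move=> uA pA x; rewrite qf_invmx. Qed.

(* Inversion reverses the Loewner order: expand [0 <= qf G1 (G2^-1 x - G1^-1 x)]. *)
Lemma qf_invmx_le G1 G2 : symmx G1 -> G1 \in unitmx -> G2 \in unitmx ->
  possemidef G1 -> (forall x, qf G1 x <= qf G2 x) ->
  forall x, qf (invmx G2) x <= qf (invmx G1) x.
Proof.
move=> s1 u1 u2 p1 le12 x.
set y := invmx G2 *m x; set z := invmx G1 *m x.
have G2y : G2 *m y = x by rewrite /y mulKVmx.
have G1z : G1 *m z = x by rewrite /z mulKVmx.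
have := p1 (y - z); rewrite qfD // qfN mulmxN G1z dotNr => yz_ge0.
have := le12 y; move: yz_ge0.
rewrite !qf_invmx // -/y -/z !qfE G2y G1z; lra.
Qed.

Lemma qf_diag_mx (v : 'rV[R]_N) x : qf (diag_mx v) x = \sum_i v 0 i * x i 0 ^+ 2.
Proof.
by rewrite qfE dotE; apply: eq_bigr => i _; rewrite mul_diag_mx mxE mulrCA expr2.
Qed.

Lemma diag_mx_mulV (v : 'rV[R]_N) : (forall i, v 0 i != 0) ->
  diag_mx v *m diag_mx (\row_j (v 0 j)^-1) = 1%:M.
Proof.
move=> v_neq0; rewrite mulmx_diag; apply/matrixP => i j; rewrite !mxE.
by case: (eqVneq i j) => [->|_]; rewrite ?mulr1n ?mulfV ?mulr0n.
Qed.

Lemma diag_mx_unit (v : 'rV[R]_N) : (forall i, v 0 i != 0) -> diag_mx v \in unitmx.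
Proof. by move=> v_neq0; have [] := mulmx1_unit (diag_mx_mulV _ v_neq0). Qed.

Lemma invmx_diag (v : 'rV[R]_N) : (forall i, v 0 i != 0) ->
  invmx (diag_mx v) = diag_mx (\row_j (v 0 j)^-1).
Proof.
move=> v_neq0; have uv := diag_mx_unit _ v_neq0.
by rewrite -[RHS]mul1mx -(mulVmx uv) -mulmxA diag_mx_mulV // mulmx1.
Qed.

End DefiniteMatrices.

Section ScalarInequalities.
Context {R : realFieldType}.

Lemma lin_quad_ge0 (b c : R) : 0 <= c ->
  (forall s, 0 < s -> s <= 1 -> 0 <= s * b + s ^+ 2 * c) -> 0 <= b.
Proof.
move=> c_ge0 h; rewrite leNgt; apply/negP => b_lt0.
set s := - b / (c - b + 1).
have den_gt0 : 0 < c - b + 1 by lra.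
have s_gt0 : 0 < s by rewrite /s divr_gt0 // oppr_gt0.
have s_le1 : s <= 1 by rewrite /s ler_pdivrMr // mul1r; lra.
have := h s s_gt0 s_le1.
have -> : s * b + s ^+ 2 * c = s * (b * (1 - b) / (c - b + 1)) by rewrite /s; field; lra.
rewrite pmulr_rge0 // pmulr_lge0 ?invr_gt0 // pmulr_lge0; lra.
Qed.

Lemma lin_quad_eq0 (b c : R) : 0 <= c -> (forall s, 0 <= s * b + s ^+ 2 * c) -> b = 0.
Proof.
move=> c_ge0 h.
have : 0 <= b by apply: (lin_quad_ge0 _ _ c_ge0) => s _ _; exact: h.
have : 0 <= - b.
  apply: (lin_quad_ge0 _ _ c_ge0) => s _ _.
  by have := h (- s); rewrite sqrrN mulrN mulNr.
lra.
Qed.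

Lemma le_mul_of_sqr_le (x y c : R) : 0 <= x -> 0 <= y -> 0 <= c ->
  x ^+ 2 <= c * y ^+ 2 -> x <= (1 + c) * y.
Proof.
move=> x_ge0 y_ge0 c_ge0 xy.
have : c * y ^+ 2 <= ((1 + c) * y) ^+ 2.
  by rewrite exprMn; apply: ler_wpM2r; [exact: sqr_ge0 | nra].
move/(le_trans xy); rewrite ler_sqr // nnegrE mulr_ge0 //; lra.
Qed.

Lemma le_div_of_sqr_le (x b c : R) : 0 <= x -> 0 <= b -> 0 < c ->
  c * x ^+ 2 <= x * b -> x <= c^-1 * b.
Proof.
move=> x_ge0 b_ge0 c_gt0 xb.
case: (eqVneq x 0) => [->|x_neq0]; first by rewrite mulr_ge0 // invr_ge0 ltW.
have x_gt0 : 0 < x by rewrite lt_def x_neq0 x_ge0.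
rewrite ler_pdivlMl // -(ler_pM2l x_gt0).
by rewrite expr2 mulrA [_ * x]mulrC in xb.
Qed.

(* The one-step inequality at the point [t^-1 z* + (1 - t^-1) zhat],
   multiplied by [t ^+ 2]. *)
Lemma scaled_step_le {Fk Fx Fs Fh u1 u0 e t : R} : 0 < t ->
  Fk + 1/2 * (t^-1 ^+ 2 * u1) <= Fx + 1/2 * (t^-1 ^+ 2 * u0) + t^-1 * e ->
  Fx <= t^-1 * Fs + (1 - t^-1) * Fh ->
  t ^+ 2 * (Fk - Fs) + u1 / 2 <= (t ^+ 2 - t) * (Fh - Fs) + u0 / 2 + t * e.
Proof.
move=> t_gt0 step conv; have t_neq0 : t != 0 by rewrite gt_eqF.
have := ler_wpM2l (sqr_ge0 t) step; have := ler_wpM2l (sqr_ge0 t) conv.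
have -> : t ^+ 2 * (t^-1 * Fs + (1 - t^-1) * Fh) = t * Fs + (t ^+ 2 - t) * Fh by field.
have -> : t ^+ 2 * (Fx + 1/2 * (t^-1 ^+ 2 * u0) + t^-1 * e) = t ^+ 2 * Fx + u0 / 2 + t * e.
  by field.
have -> : t ^+ 2 * (Fk + 1/2 * (t^-1 ^+ 2 * u1)) = t ^+ 2 * Fk + u1 / 2 by field.
lra.
Qed.

End ScalarInequalities.

Section SupportFunction.
Context {R : realType} {N : nat}.
Implicit Types (x y q : 'cV[R]_N) (B : set 'cV[R]_N).

Lemma supp_ge {B} y {x} : B x -> ((dot y x)%:E <= supp B y)%E.
Proof. by move=> Bx; apply: ereal_sup_ubound; exists x. Qed.

Lemma supp_gtNy {B} y {x} : B x -> (-oo < supp B y)%E.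
Proof. by move=> Bx; apply: lt_le_trans (supp_ge y Bx); rewrite ltNye. Qed.

Lemma supp_convex {B y1 y2} {r1 r2 s : R} :
  supp B y1 = r1%:E -> supp B y2 = r2%:E -> 0 <= s -> s <= 1 ->
  (supp B (s *: y1 + (1 - s) *: y2) <= (s * r1 + (1 - s) * r2)%:E)%E.
Proof.
move=> e1 e2 s_ge0 s_le1; apply/ereal_supP => _ [x Bx <-].
rewrite lee_fin dotDl !dotZl.
have : dot y1 x <= r1 by rewrite -lee_fin -e1 supp_ge.
have : dot y2 x <= r2 by rewrite -lee_fin -e2 supp_ge.
move=> le2 le1; apply: lerD; apply: ler_wpM2l => //; lra.
Qed.

(* [fine] maps [+oo] to [0]: [rsupp] is meaningful only where [finsupp] holds. *)
Definition rsupp B y : R := fine (supp B y).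
Definition finsupp B y : Prop := supp B y = (rsupp B y)%:E.

Lemma finsupp_lt {B y x} : B x -> (supp B y < +oo)%E -> finsupp B y.
Proof.
move=> Bx lt_oo; rewrite /finsupp /rsupp fineK // fin_numE.
by rewrite gt_eqF ?(supp_gtNy y Bx) ?lt_eqF.
Qed.

Lemma finsupp_le {B u v} {r r' : R} {x} : B x -> finsupp B v ->
  (supp B u + r%:E <= supp B v + r'%:E)%E -> finsupp B u.
Proof.
move=> Bx fv; rewrite fv -EFinD => le_uv; apply: (finsupp_lt Bx).
by move: le_uv; case: (supp B u) => [r''| |] //= _; rewrite ltry.
Qed.

Lemma finsupp_of_sum_le {B1 B2 : set 'cV[R]_N} {x1 x2 u v} {r r' : R} :
  B1 x1 -> B2 x2 -> ((r%:E + supp B1 u) + supp B2 v <= r'%:E)%E ->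
  finsupp B1 u /\ finsupp B2 v.
Proof.
move=> B1x B2x le_r.
have gt1 := supp_gtNy u B1x; have gt2 := supp_gtNy v B2x.
split; [apply: (finsupp_lt B1x) | apply: (finsupp_lt B2x)];
  move: le_r gt1 gt2; by case: (supp B1 u) => [?| |] //=; case: (supp B2 v) => [?| |].
Qed.

Lemma finsupp_convex {B y1 y2 s x} : B x -> finsupp B y1 -> finsupp B y2 ->
  0 <= s -> s <= 1 ->
  finsupp B (s *: y1 + (1 - s) *: y2) /\
  rsupp B (s *: y1 + (1 - s) *: y2) <= s * rsupp B y1 + (1 - s) * rsupp B y2.
Proof.
move=> Bx f1 f2 s_ge0 s_le1.
have le_conv := supp_convex f1 f2 s_ge0 s_le1.
have f : finsupp B (s *: y1 + (1 - s) *: y2).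
  by apply: (finsupp_lt Bx); apply: le_lt_trans le_conv _; rewrite ltey.
by split => //; rewrite -lee_fin -f.
Qed.

Lemma argmin_supp_variational {B} {h : 'cV[R]_N -> R} {x0 q} {D c : R} {x} :
  B x -> finsupp B x0 -> finsupp B q -> 0 <= c ->
  (forall q', (supp B x0 + (h x0)%:E <= supp B q' + (h q')%:E)%E) ->
  (forall s, h (x0 + s *: (q - x0)) = h x0 + s * D + s ^+ 2 * c) ->
  rsupp B x0 - D <= rsupp B q.
Proof.
move=> Bx f0 fq c_ge0 x0_min h_quad.
suff : 0 <= rsupp B q - rsupp B x0 + D by lra.
apply: (lin_quad_ge0 _ _ c_ge0) => s s_gt0 s_le1.
have seg : x0 + s *: (q - x0) = s *: q + (1 - s) *: x0.
  by apply/matrixP => i j; rewrite !mxE; ring.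
have [fs les] := finsupp_convex Bx fq f0 (ltW s_gt0) s_le1.
have := x0_min (x0 + s *: (q - x0)).
rewrite {1}seg fs f0 -!EFinD lee_fin h_quad -seg in les *.
lra.
Qed.

End SupportFunction.

Section AccelerationParameters.
Context {R : realType} {N : nat}.

Lemma tacc_ge1 j : 1 <= tacc j :> R.
Proof.
elim: j => [|j IH] //=.
have : 1 <= Num.sqrt (1 + 4 * tacc j ^+ 2) :> R.
  by rewrite -{1}sqrtr1; apply: ler_wsqrtr; have := sqr_ge0 (tacc j : R); lra.
lra.
Qed.

Lemma tacc_succ_ge j : tacc j + 1/2 <= tacc j.+1 :> R.
Proof.
have t_ge1 := tacc_ge1 j; rewrite /=.
have : 2 * tacc j <= Num.sqrt (1 + 4 * tacc j ^+ 2) :> R.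
  rewrite -[X in X <= _]ger0_norm -?sqrtr_sqr; last lra.
  by apply: ler_wsqrtr; rewrite exprMn; lra.
lra.
Qed.

Lemma tacc_succ_le j : tacc j.+1 <= tacc j + 1 :> R.
Proof.
have t_ge1 := tacc_ge1 j; rewrite /=.
have : Num.sqrt (1 + 4 * tacc j ^+ 2) <= 1 + 2 * tacc j :> R.
  rewrite -[X in _ <= X]ger0_norm -?sqrtr_sqr; last lra.
  by apply: ler_wsqrtr; nra.
lra.
Qed.

Lemma tacc_sqr_succ j : tacc j.+1 ^+ 2 - tacc j.+1 = tacc j ^+ 2 :> R.
Proof.
rewrite /=; set t : R := tacc j.
have : Num.sqrt (1 + 4 * t ^+ 2) ^+ 2 = 1 + 4 * t ^+ 2.
  by rewrite sqr_sqrtr //; have := sqr_ge0 t; lra.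
rewrite !expr2; nra.
Qed.

Lemma tacc_ge j : j.+2%:R / 2 <= tacc j :> R.
Proof.
elim: j => [|j IH]; first by rewrite /= divff.
by have := tacc_succ_ge j; rewrite -[j.+3%:R]natr1 -[j.+2%:R]natr1 in IH *; lra.
Qed.

Lemma tacc_le j : tacc j <= j.+1%:R :> R.
Proof.
elim: j => [|j IH] //.
by have := tacc_succ_le j; rewrite -[j.+2%:R]natr1; lra.
Qed.

Lemma tk_ge1 k : 1 <= tk k :> R.
Proof. exact: tacc_ge1. Qed.

Lemma tk_neq0 k : tk k != 0 :> R.
Proof. by rewrite gt_eqF // (lt_le_trans ltr01 (tk_ge1 k)). Qed.

Lemma convex_comb_sub (t : R) (x y z : 'cV[R]_N) : t != 0 ->
  t^-1 *: z + (1 - t^-1) *: y - x = - t^-1 *: (t *: x - (t - 1) *: y - z).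
Proof. by move=> t_neq0; apply/matrixP => i j; rewrite !mxE; field. Qed.

Lemma extrapolation_comb (u ut : nat -> 'cV[R]_N) (z : 'cV[R]_N) :
  u 1%N = ut 0%N ->
  (forall k, (1 <= k)%N -> u k.+1 = ut k + betak k *: (ut k - ut k.-1)) ->
  forall j, tk j.+1 *: u j.+1 - (tk j.+1 - 1) *: ut j - z
            = tk j *: ut j - (tk j - 1) *: ut j.-1 - z.
Proof.
move=> u1 u_succ [|j]; first by rewrite u1.
rewrite u_succ // /betak; have := tk_neq0 j.+2.
by move=> t_neq0; apply/matrixP => i i'; rewrite !mxE; field.
Qed.

End AccelerationParameters.

(* A discrete Gronwall argument: an energy [E] whose increments are controlled
   by a summable sequence [lam] times [sqrt E] stays bounded. *)
Section PerturbedDescent.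
Context {R : realFieldType}.
Variables (E a lam : nat -> R) (C Lam : R).
Hypotheses (C_ge0 : 0 <= C) (lam_ge0 : forall k, 0 <= lam k) (a_ge0 : forall k, 0 <= a k).
Hypothesis lam_sum_le : forall k, \sum_(1 <= j < k.+1) lam j <= Lam.
Hypothesis E_succ_le : forall k, E k.+1 <= E k + C * lam k.+1 * (lam k.+1 + a k + a k.+1).
Hypothesis sqr_a_le : forall k, a k ^+ 2 / 2 <= E k.

Let S0 := 2 * E 0%N + 2 * C * Lam ^+ 2.
Let c := 2 * C * Lam.
(* The bound on [a]: [a ^+ 2 <= S0 + 2 c B + c a] forces [a <= B]. *)
Let B := S0 + 3 * c + 1.
Let lam_psum k := \sum_(1 <= j < k.+1) lam j.

Lemma Lam_ge0 : 0 <= Lam.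
Proof. by have := lam_sum_le 0; rewrite big_geq. Qed.

Lemma lam_le_Lam k : lam k.+1 <= Lam.
Proof.
apply: le_trans (lam_sum_le k.+1).
by rewrite big_nat_recr //= lerDr; apply: sumr_ge0.
Qed.

Lemma lam_psum_ge0 k : 0 <= lam_psum k.
Proof. exact: sumr_ge0. Qed.

Lemma descent_consts_ge0 : [/\ 0 <= E 0%N, 0 <= S0, 0 <= c & 0 <= B].
Proof.
have E0_ge0 : 0 <= E 0%N by have := sqr_a_le 0; have := sqr_ge0 (a 0%N); lra.
have L_ge0 := Lam_ge0; have L2_ge0 := sqr_ge0 Lam.
have CL_ge0 : 0 <= C * Lam by rewrite mulr_ge0.
rewrite /B /S0 /c; split; nra.
Qed.

Lemma a_succ_le k : a k <= B -> E k <= E 0%N + C * (Lam + 2 * B) * lam_psum k ->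
  a k.+1 <= B.
Proof.
move=> ak_le Ek_le; have [E0_ge0 S0_ge0 c_ge0 B_ge0] := descent_consts_ge0.
have lam_ge0' := lam_ge0 k.+1; have lam_le := lam_le_Lam k.
have ak1_ge0 := a_ge0 k.+1; have psum_ge0 := lam_psum_ge0 k.
have psum_le : lam_psum k + lam k.+1 <= Lam.
  by have := lam_sum_le k.+1; rewrite big_nat_recr.
have sqr_le : a k.+1 ^+ 2 <= S0 + 2 * c * B + c * a k.+1.
  have := E_succ_le k; have := sqr_a_le k.+1.
  have : C * lam k.+1 * a k <= C * lam k.+1 * B by apply: ler_wpM2l; rewrite ?mulr_ge0.
  have : C * lam k.+1 * a k.+1 <= C * Lam * a k.+1 by apply: ler_wpM2r => //; apply: ler_wpM2l.
  have : C * (Lam + 2 * B) * (lam_psum k + lam k.+1) <= C * (Lam + 2 * B) * Lam.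
    by apply: ler_wpM2l; [rewrite mulr_ge0 // addr_ge0 ?mulr_ge0 ?Lam_ge0 | ].
  have : C * lam k.+1 * lam k.+1 <= C * Lam * lam k.+1.
    by apply: ler_wpM2r => //; apply: ler_wpM2l.
  have : 0 <= C * lam k.+1 * B by rewrite !mulr_ge0.
  rewrite /S0 /c; lra.
rewrite leNgt; apply/negP => B_lt.
have B_ge1 : 1 <= B by rewrite /B; lra.
have : 0 <= (a k.+1 - B) * (a k.+1 + B - c) by apply: mulr_ge0; rewrite /B in B_lt *; lra.
have : 0 <= (B - 1) * S0 by apply: mulr_ge0; lra.
have : B * B = B * (S0 + 3 * c + 1) by [].
move=> BB BS0 prod_ge0; nra.
Qed.

Lemma E_succ_psum_le k : a k <= B -> a k.+1 <= B ->
  E k <= E 0%N + C * (Lam + 2 * B) * lam_psum k ->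
  E k.+1 <= E 0%N + C * (Lam + 2 * B) * lam_psum k.+1.
Proof.
move=> ak_le ak1_le Ek_le.
have lam_ge0' := lam_ge0 k.+1; have Clam_ge0 : 0 <= C * lam k.+1 by rewrite mulr_ge0.
have : C * lam k.+1 * a k <= C * lam k.+1 * B by apply: ler_wpM2l.
have : C * lam k.+1 * a k.+1 <= C * lam k.+1 * B by apply: ler_wpM2l.
have : C * lam k.+1 * lam k.+1 <= C * lam k.+1 * Lam.
  by apply: ler_wpM2l; last exact: lam_le_Lam.
have := E_succ_le k.
rewrite /lam_psum in Ek_le *; rewrite big_nat_recr //=; nra.
Qed.

Lemma descent_invariant k :
  a k <= B /\ E k <= E 0%N + C * (Lam + 2 * B) * lam_psum k.
Proof.
elim: k => [|k [ak_le Ek_le]].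
  split; last by rewrite /lam_psum big_geq // mulr0 addr0.
  have [_ _ c_ge0 _] := descent_consts_ge0.
  have : a 0%N <= 1 + a 0%N ^+ 2 by have := sqr_ge0 (a 0%N - 1/2); nra.
  have : 0 <= C * Lam ^+ 2 by rewrite mulr_ge0 ?sqr_ge0.
  have := sqr_a_le 0; rewrite /B /S0 /c in c_ge0 *; lra.
have ak1_le := a_succ_le _ ak_le Ek_le.
by split => //; apply: E_succ_psum_le.
Qed.

Lemma perturbed_descent_bounded : exists Eb, forall k, E k <= Eb.
Proof.
have [_ _ _ B_ge0] := descent_consts_ge0.
exists (E 0%N + C * (Lam + 2 * B) * Lam) => k.
apply: le_trans (proj2 (descent_invariant k)) _; rewrite lerD2l.
by apply: ler_wpM2l; [rewrite mulr_ge0 // addr_ge0 ?mulr_ge0 ?Lam_ge0 | exact: lam_sum_le].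
Qed.

End PerturbedDescent.

Section LumpedMass.
Context {R : realType} {N : nat}.
Context {Mh Wh : 'M[R]_N} {w : 'rV[R]_N} {cn : R} {i0 : 'I_N}.
Hypotheses (sM : symmx Mh) (pdM : posdef Mh) (cn_gt0 : 0 < cn).
Hypotheses (Wh_diag : Wh = diag_mx w) (w_gt0 : forall i, 0 < w 0 i).
Hypothesis mass_lumped_le : forall z, qf Mh z <= qf Wh z /\ qf Wh z <= cn * qf Mh z.
Hypothesis w_min : forall i, w 0 i0 <= w 0 i.
Implicit Types x : 'cV[R]_N.

Lemma w_neq0 i : w 0 i != 0.
Proof. by rewrite gt_eqF. Qed.

Lemma invmx_lumped : invmx Wh = diag_mx (\row_j (w 0 j)^-1).
Proof. by rewrite Wh_diag invmx_diag //; exact: w_neq0. Qed.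

Lemma symmx_invmx_lumped : symmx (invmx Wh).
Proof. by rewrite invmx_lumped /symmx tr_diag_mx. Qed.

Lemma qf_invmx_lumped x : qf (invmx Wh) x = \sum_i (w 0 i)^-1 * x i 0 ^+ 2.
Proof. by rewrite invmx_lumped qf_diag_mx; apply: eq_bigr => i _; rewrite mxE. Qed.

Lemma qf_invmx_mass_le x : qf (invmx Mh) x <= cn * qf (invmx Wh) x.
Proof.
have cnW_unit : cn^-1 *: Wh \in unitmx.
  by rewrite unitmxZ ?unitfE ?invr_eq0 ?gt_eqF // Wh_diag diag_mx_unit //; exact: w_neq0.
have := @qf_invmx_le _ _ (cn^-1 *: Wh) Mh _ cnW_unit (posdef_unitmx _ sM pdM) _ _ x.
rewrite invmxZ // ?invrK ?qf_scalemx; first apply.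
- by rewrite /symmx linearZ /= Wh_diag tr_diag_mx.
- move=> y; rewrite qf_scalemx Wh_diag qf_diag_mx.
  apply: mulr_ge0; first by rewrite invr_ge0 ltW.
  by apply: sumr_ge0 => i _; rewrite mulr_ge0 ?sqr_ge0 // ltW.
- by move=> y; rewrite qf_scalemx ler_pdivrMl //; exact: (proj2 (mass_lumped_le y)).
Qed.

Lemma qf_invmx_mass_le_dot x : qf (invmx Mh) x <= cn * (w 0 i0)^-1 * dot x x.
Proof.
apply: le_trans (qf_invmx_mass_le x) _; rewrite -mulrA; apply: ler_wpM2l; first exact: ltW.
rewrite qf_invmx_lumped dot_self_sum mulr_sumr; apply: ler_sum => i _.
by rewrite ler_wpM2r ?sqr_ge0 // lef_pV2 ?posrE.
Qed.

Lemma dot_le_qf_invmx_lumped x : dot x x <= (\sum_i w 0 i) * qf (invmx Wh) x.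
Proof.
rewrite qf_invmx_lumped dot_self_sum mulr_sumr; apply: ler_sum => i _.
rewrite mulrA -[X in X <= _]mul1r ler_wpM2r ?sqr_ge0 // ler_pdivlMr // mul1r.
by rewrite (bigD1 i) //= lerDl sumr_ge0 // => j _; rewrite ltW.
Qed.

Lemma dot_le_qf_mass x : dot x x <= cn / w 0 i0 * qf Mh x.
Proof.
rewrite mulrAC ler_pdivlMr // mulrC; apply: le_trans (proj2 (mass_lumped_le x)).
rewrite Wh_diag qf_diag_mx dot_self_sum mulr_sumr; apply: ler_sum => i _.
by rewrite ler_wpM2r ?sqr_ge0.
Qed.

End LumpedMass.

Section InexactABCD.
Context {R : realType} {N : nat}.
Variables (Kh Mh Wi : 'M[R]_N) (yd f : 'cV[R]_N) (alpha sigma cn : R).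
Variables (C S : set 'cV[R]_N) (c0 s0 : 'cV[R]_N).
Hypotheses (sM : symmx Mh) (pdM : posdef Mh) (sW : symmx Wi).
Hypotheses (alpha_gt0 : 0 < alpha) (sigma_gt0 : 0 < sigma).
Hypotheses (C_c0 : C c0) (S_s0 : S s0).
Hypothesis sigma_majorizes : forall x, qf (invmx Mh) x <= sigma * dot x x.
Hypothesis cn_majorizes : forall x, qf (invmx Mh) x <= cn * qf Wi x.
Implicit Types (x p l m q : 'cV[R]_N).
Local Notation Mi := (invmx Mh).

Lemma unitmx_M : Mh \in unitmx.
Proof. exact: posdef_unitmx. Qed.

Lemma symmx_Mi : symmx Mi.
Proof. exact: symmx_invmx. Qed.

Lemma possemidef_Mi : possemidef Mi.
Proof. exact/possemidef_invmx/posdef_semidef/pdM/unitmx_M. Qed.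

Lemma qf_Mi_ge0 x : 0 <= qf Mi x.
Proof. exact: possemidef_Mi. Qed.

Lemma sigma_ge0 : 0 <= sigma.
Proof. exact: ltW. Qed.

Lemma alpha_neq0 : alpha != 0.
Proof. by rewrite gt_eqF. Qed.

Lemma inv2alpha_ge0 : 0 <= 1 / (2 * alpha).
Proof. by rewrite divr_ge0 // mulr_ge0 // ltW. Qed.

Definition Phi p l m : R := dot (Mh *m f) p + phi Kh Mh yd alpha p l m.

Lemma Phi_expand p0 l0 m0 p l m :
  Phi p l m = Phi p0 l0 m0 +
   (dot (Mh *m f) (p - p0)
    + dot (Kh^T *m p0 + l0 - Mh *m yd) (Mi *m (Kh^T *m (p - p0) + (l - l0)))
    + alpha^-1 * dot (Mh *m p0 - m0) (Mi *m (Mh *m (p - p0) - (m - m0))))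
   + (1/2 * qf Mi (Kh^T *m (p - p0) + (l - l0))
      + 1/(2 * alpha) * qf Mi (Mh *m (p - p0) - (m - m0))).
Proof.
have e1 : Kh^T *m p + l - Mh *m yd =
   (Kh^T *m p0 + l0 - Mh *m yd) + (Kh^T *m (p - p0) + (l - l0)).
  by rewrite mulmxBr; apply/matrixP => i j; rewrite !mxE; ring.
have e2 : Mh *m p - m = (Mh *m p0 - m0) + (Mh *m (p - p0) - (m - m0)).
  by rewrite mulmxBr; apply/matrixP => i j; rewrite !mxE; ring.
rewrite /Phi /phi e1 e2 !(qfD _ _ _ symmx_Mi) dotBr.
by field; exact: alpha_neq0.
Qed.

Lemma Phi_line p0 l0 m0 dp dl dm s :
  Phi (p0 + s *: dp) (l0 + s *: dl) (m0 + s *: dm) = Phi p0 l0 m0 +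
   s * (dot (Mh *m f) dp
    + dot (Kh^T *m p0 + l0 - Mh *m yd) (Mi *m (Kh^T *m dp + dl))
    + alpha^-1 * dot (Mh *m p0 - m0) (Mi *m (Mh *m dp - dm)))
   + s ^+ 2 * (1/2 * qf Mi (Kh^T *m dp + dl) + 1/(2 * alpha) * qf Mi (Mh *m dp - dm)).
Proof.
have addK (x0 d : 'cV[R]_N) : x0 + s *: d - x0 = s *: d by rewrite addrC addKr.
rewrite (Phi_expand p0 l0 m0) !addK -!scalemxAr -scalerDr -scalerBr.
by rewrite !qfZ -!scalemxAr !dotZr; ring.
Qed.

Lemma Phi_convex p1 l1 m1 p2 l2 m2 s : 0 <= s -> s <= 1 ->
  Phi (s *: p1 + (1 - s) *: p2) (s *: l1 + (1 - s) *: l2) (s *: m1 + (1 - s) *: m2)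
  <= s * Phi p1 l1 m1 + (1 - s) * Phi p2 l2 m2.
Proof.
move=> s_ge0 s_le1.
have seg (x1 x2 : 'cV[R]_N) r : r *: x1 + (1 - r) *: x2 = x2 + r *: (x1 - x2).
  by apply/matrixP => i j; rewrite !mxE; ring.
rewrite [Phi p1 l1 m1](_ : _ =
    Phi (p2 + 1 *: (p1 - p2)) (l2 + 1 *: (l1 - l2)) (m2 + 1 *: (m1 - m2))); last first.
  by rewrite !scale1r !(addrC _ (_ - _)) !subrK.
rewrite !seg !Phi_line expr1n.
set G := (X in _ + s * X + _ <= _).
set Q := (X in _ + _ + s ^+ 2 * X <= _).
rewrite [1 * G]mul1r [1 * Q]mul1r.
have Q_ge0 : 0 <= Q.
  by apply: addr_ge0; apply: mulr_ge0; rewrite ?inv2alpha_ge0 ?qf_Mi_ge0 //.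
have : 0 <= s * (1 - s) * Q by rewrite !mulr_ge0 // subr_ge0.
nra.
Qed.

Definition hessp : 'M[R]_N := Kh *m Mi *m Kh^T + alpha^-1 *: Mh.
Definition gradp0 l m := Mh *m f + Kh *m Mi *m (l - Mh *m yd) - alpha^-1 *: m.
Definition gradp p l m := hessp *m p + gradp0 l m.

Lemma qf_hessp x : qf hessp x = qf Mi (Kh^T *m x) + alpha^-1 * qf Mh x.
Proof. by rewrite qf_addmx qf_scalemx !qfE -!mulmxA dot_mulmxr. Qed.

Lemma qf_hessp_ge x : alpha^-1 * qf Mh x <= qf hessp x.
Proof. by rewrite qf_hessp lerDr qf_Mi_ge0. Qed.

Lemma qf_hessp_ge0 x : 0 <= qf hessp x.
Proof.
apply: le_trans (qf_hessp_ge x); apply: mulr_ge0; first by rewrite invr_ge0 ltW.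
exact: posdef_semidef.
Qed.

Lemma symmx_hessp : symmx hessp.
Proof.
rewrite /symmx /hessp linearD /= linearZ /= sM !trmx_mul trmxK.
by rewrite symmx_Mi mulmxA.
Qed.

Lemma unitmx_hessp : hessp \in unitmx.
Proof.
apply: posdef_unitmx symmx_hessp _ => x x_neq0.
by apply: lt_le_trans (qf_hessp_ge x); rewrite mulr_gt0 ?invr_gt0 ?pdM.
Qed.

Lemma dot_gradp p l m d : dot (gradp p l m) d = dot (Mh *m f) d
    + dot (Kh^T *m p + l - Mh *m yd) (Mi *m (Kh^T *m d))
    + alpha^-1 * dot (Mh *m p - m) (Mi *m (Mh *m d)).
Proof.
rewrite (dot_mulmxr _ Mi) symmx_Mi (dot_mulmxr _ (Kh^T)) trmxK.
rewrite (dot_mulmxr _ Mi) symmx_Mi (dot_mulmxr _ Mh) sM mulKVmx ?unitmx_M //.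
rewrite -dotZl -!dotDl; congr dot.
rewrite /gradp /gradp0 /hessp mulmxDl -scalemxAl !mulmxBr !mulmxDr !mulmxA.
by apply/matrixP => i j; rewrite !mxE; ring.
Qed.

Lemma Phi_line_p p l m d s :
  Phi (p + s *: d) l m = Phi p l m + s * dot (gradp p l m) d + s ^+ 2 / 2 * qf hessp d.
Proof.
have := Phi_line p l m d 0 0 s; rewrite !scaler0 !addr0 subr0 => ->.
rewrite dot_gradp qf_hessp [qf Mi (Mh *m d)]qfE mulKmx ?unitmx_M // [dot (Mh *m d) d]dotC -qfE.
by field; exact: alpha_neq0.
Qed.

Lemma argmin_p_gradp pt l m dp :
  (forall q, dot (Mh *m f) pt + phi Kh Mh yd alpha pt l m - dot dp pt
     <= dot (Mh *m f) q + phi Kh Mh yd alpha q l m - dot dp q) ->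
  gradp pt l m = dp.
Proof.
move=> pt_min; apply: dot_inj => d; apply/eqP; rewrite -subr_eq0; apply/eqP.
have c_ge0 : 0 <= qf hessp d / 2 by rewrite divr_ge0 ?qf_hessp_ge0.
apply: (lin_quad_eq0 _ _ c_ge0) => s.
have := pt_min (pt + s *: d); rewrite -!/(Phi _ _ _) Phi_line_p dotDr dotZr.
lra.
Qed.

Lemma hessp_combination (t : R) {x1 x2 x3 l1 m1 l2 m2 l3 m3 g} :
  gradp x1 l1 m1 = g -> gradp x2 l2 m2 = 0 -> gradp x3 l3 m3 = 0 ->
  hessp *m (t *: x1 - (t - 1) *: x2 - x3) =
   t *: g - Kh *m Mi *m (t *: l1 - (t - 1) *: l2 - l3)
   + alpha^-1 *: (t *: m1 - (t - 1) *: m2 - m3).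
Proof.
move=> g1 g2 g3; rewrite !mulmxBr -!scalemxAr.
have hessp_mul x l m' : hessp *m x = gradp x l m' - gradp0 l m' by rewrite /gradp addrK.
rewrite (hessp_mul x1 l1 m1) (hessp_mul x2 l2 m2) (hessp_mul x3 l3 m3) g1 g2 g3 /gradp0 !mulmxBr.
by apply/matrixP => i j; rewrite !mxE; ring.
Qed.

Definition pmin l m := - (invmx hessp *m gradp0 l m).

Lemma gradp_pmin l m : gradp (pmin l m) l m = 0.
Proof. by rewrite /gradp /pmin mulmxN mulKVmx ?unitmx_hessp // addNr. Qed.

Lemma Phi_pmin_le l m q : Phi (pmin l m) l m <= Phi q l m.
Proof.
rewrite -[q](addrNK (pmin l m)) addrC -[q - _]scale1r Phi_line_p gradp_pmin dot0l.
by rewrite mulr0 addr0 lerDl mulr_ge0 ?qf_hessp_ge0.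
Qed.

Lemma symmx_sigma_sub_Mi : symmx (sigma%:M - Mi).
Proof. by rewrite /symmx linearB /= tr_scalar_mx symmx_Mi. Qed.

Lemma symmx_cn_sub_Mi : symmx (cn *: Wi - Mi).
Proof. by rewrite /symmx linearB /= linearZ /= sW symmx_Mi. Qed.

Definition lsub_obj pt l dl q : R := 1/2 * qf Mi (q - Mh *m yd + Kh^T *m pt)
  + 1/2 * qf (sigma%:M - Mi) (q - l) - dot dl q.

Definition msub_obj pt m dm q : R := 1/(2 * alpha) * qf Mi (q - Mh *m pt)
  + 1/(2 * alpha) * qf (cn *: Wi - Mi) (q - m) - dot dm q.

Lemma lstep_variational {pt l lt dl q} : finsupp C lt -> finsupp C q ->
  (forall q', (supp C lt + (lsub_obj pt l dl lt)%:E
               <= supp C q' + (lsub_obj pt l dl q')%:E)%E) ->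
  rsupp C lt - (dot (Kh^T *m pt + l - Mh *m yd) (Mi *m (q - lt))
     + sigma * dot (lt - l) (q - lt) - dot dl (q - lt)) <= rsupp C q.
Proof.
move=> flt fq lt_min; set d := q - lt.
pose D := dot (lt - Mh *m yd + Kh^T *m pt) (Mi *m d)
   + dot (lt - l) ((sigma%:M - Mi) *m d) - dot dl d.
pose c := 1/2 * qf Mi d + 1/2 * qf (sigma%:M - Mi) d.
have c_ge0 : 0 <= c.
  have -> : c = 1/2 * (sigma * dot d d) by rewrite /c qf_submx qf_scalar_mx; ring.
  by rewrite !mulr_ge0 ?sigma_ge0 ?dot_self_ge0.
have quad s : lsub_obj pt l dl (lt + s *: d) = lsub_obj pt l dl lt + s * D + s ^+ 2 * c.
  rewrite /lsub_obj.
  have -> : lt + s *: d - Mh *m yd + Kh^T *m pt = (lt - Mh *m yd + Kh^T *m pt) + s *: d.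
    by apply/matrixP => i j; rewrite !mxE; ring.
  have -> : lt + s *: d - l = (lt - l) + s *: d.
    by apply/matrixP => i j; rewrite !mxE; ring.
  rewrite (qfD _ _ _ symmx_Mi) (qfD _ _ _ symmx_sigma_sub_Mi) !qfZ -!scalemxAr !dotZr.
  by rewrite dotDr dotZr /D /c; field.
have := argmin_supp_variational C_c0 flt fq c_ge0 lt_min quad.
suff -> : D = dot (Kh^T *m pt + l - Mh *m yd) (Mi *m d)
     + sigma * dot (lt - l) d - dot dl d by [].
rewrite /D; have -> : lt - Mh *m yd + Kh^T *m pt = (Kh^T *m pt + l - Mh *m yd) + (lt - l).
  by apply/matrixP => i j; rewrite !mxE; ring.
rewrite [dot (_ + (lt - l)) _]dotDl mulmxBl mul_scalar_mx [dot (lt - l) (_ - _)]dotBr.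
by rewrite dotZr; ring.
Qed.

Lemma mstep_variational {pt m mt dm q} : finsupp S mt -> finsupp S q ->
  (forall q', (supp S mt + (msub_obj pt m dm mt)%:E
               <= supp S q' + (msub_obj pt m dm q')%:E)%E) ->
  rsupp S mt - (alpha^-1 * (- dot (Mh *m pt - m) (Mi *m (q - mt))
     + cn * dot (mt - m) (Wi *m (q - mt))) - dot dm (q - mt)) <= rsupp S q.
Proof.
move=> fmt fq mt_min; set d := q - mt.
pose D := 1/(2 * alpha) * (2 * dot (mt - Mh *m pt) (Mi *m d))
   + 1/(2 * alpha) * (2 * dot (mt - m) ((cn *: Wi - Mi) *m d)) - dot dm d.
pose c := 1/(2 * alpha) * qf Mi d + 1/(2 * alpha) * qf (cn *: Wi - Mi) d.
have c_ge0 : 0 <= c.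
  rewrite /c qf_submx qf_scalemx -mulrDr addrC subrK.
  by rewrite mulr_ge0 ?inv2alpha_ge0 // (le_trans (qf_Mi_ge0 d)).
have quad s : msub_obj pt m dm (mt + s *: d) = msub_obj pt m dm mt + s * D + s ^+ 2 * c.
  rewrite /msub_obj.
  have -> : mt + s *: d - Mh *m pt = (mt - Mh *m pt) + s *: d.
    by apply/matrixP => i j; rewrite !mxE; ring.
  have -> : mt + s *: d - m = (mt - m) + s *: d.
    by apply/matrixP => i j; rewrite !mxE; ring.
  rewrite (qfD _ _ _ symmx_Mi) (qfD _ _ _ symmx_cn_sub_Mi) !qfZ -!scalemxAr !dotZr.
  by rewrite dotDr dotZr /D /c; ring.
have := argmin_supp_variational S_s0 fmt fq c_ge0 mt_min quad.
suff -> : D = alpha^-1 * (- dot (Mh *m pt - m) (Mi *m d)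
     + cn * dot (mt - m) (Wi *m d)) - dot dm d by [].
rewrite /D; have -> : mt - Mh *m pt = (mt - m) - (Mh *m pt - m).
  by apply/matrixP => i j; rewrite !mxE; ring.
rewrite [dot (mt - m - _) _]dotBl mulmxBl -scalemxAl [dot (mt - m) (_ - _)]dotBr dotZr.
by field; exact: alpha_neq0.
Qed.

Definition Snorm l m : R := sigma * dot l l + cn / alpha * qf Wi m.

Lemma cn_qf_Wi_ge0 m : 0 <= cn * qf Wi m.
Proof. exact: le_trans (qf_Mi_ge0 m) (cn_majorizes m). Qed.

Lemma Snorm_ge_l l m : sigma * dot l l <= Snorm l m.
Proof. by rewrite /Snorm lerDl mulrAC mulr_ge0 ?cn_qf_Wi_ge0 // invr_ge0 ltW. Qed.

Lemma Snorm_ge0 l m : 0 <= Snorm l m.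
Proof. by apply: le_trans (Snorm_ge_l l m); rewrite mulr_ge0 ?sigma_ge0 ?dot_self_ge0. Qed.

Lemma SnormZ (c : R) l m : Snorm (c *: l) (c *: m) = c ^+ 2 * Snorm l m.
Proof. by rewrite /Snorm qfZ dotZl dotZr; ring. Qed.

Lemma Snorm_ge_m l m : cn / alpha * qf Wi m <= Snorm l m.
Proof. by rewrite /Snorm lerDr mulr_ge0 ?sigma_ge0 ?dot_self_ge0. Qed.

Lemma Snorm_split l0 l1 l2 m0 m1 m2 : Snorm (l2 - l0) (m2 - m0) = Snorm (l1 - l0) (m1 - m0)
  + 2 * (sigma * dot (l1 - l0) (l2 - l1) + cn / alpha * dot (m1 - m0) (Wi *m (m2 - m1)))
  + Snorm (l2 - l1) (m2 - m1).
Proof.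
have split (x0 x1 x2 : 'cV[R]_N) : x2 - x0 = (x1 - x0) + (x2 - x1) by rewrite [RHS]addrC subrKA.
by rewrite /Snorm (split l0 l1 l2) (split m0 m1 m2) dot_selfD (qfD _ _ _ sW); ring.
Qed.

Definition Fval p l m : R := Phi p l m + rsupp C l + rsupp S m.

Lemma Fval_convex p1 l1 m1 p2 l2 m2 s :
  finsupp C l1 -> finsupp S m1 -> finsupp C l2 -> finsupp S m2 -> 0 <= s -> s <= 1 ->
  [/\ finsupp C (s *: l1 + (1 - s) *: l2), finsupp S (s *: m1 + (1 - s) *: m2) &
  Fval (s *: p1 + (1 - s) *: p2) (s *: l1 + (1 - s) *: l2) (s *: m1 + (1 - s) *: m2)
  <= s * Fval p1 l1 m1 + (1 - s) * Fval p2 l2 m2].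
Proof.
move=> fl1 fm1 fl2 fm2 s_ge0 s_le1.
have [fl rl] := finsupp_convex C_c0 fl1 fl2 s_ge0 s_le1.
have [fm rm] := finsupp_convex S_s0 fm1 fm2 s_ge0 s_le1.
split => //; have := Phi_convex p1 l1 m1 p2 l2 m2 _ s_ge0 s_le1.
rewrite /Fval; lra.
Qed.

(* The one-step inequality of the inexact block sweep; [sigma%:M - Mi] and
   [cn *: Wi - Mi] being positive semidefinite is what makes the proximal
   terms telescope into [Snorm]. *)
Lemma step_inequality {pt lt mt l m dp dl dm} p lam mu :
  finsupp C lt -> finsupp S mt -> finsupp C lam -> finsupp S mu ->
  gradp pt l m = dp ->
  (forall q, (supp C lt + (lsub_obj pt l dl lt)%:E
              <= supp C q + (lsub_obj pt l dl q)%:E)%E) ->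
  (forall q, (supp S mt + (msub_obj pt m dm mt)%:E
              <= supp S q + (msub_obj pt m dm q)%:E)%E) ->
  Fval pt lt mt + 1/2 * Snorm (lam - lt) (mu - mt)
   <= Fval p lam mu + 1/2 * Snorm (lam - l) (mu - m)
      + dot dp (pt - p) + dot dl (lt - lam) + dot dm (mt - mu).
Proof.
move=> flt fmt flam fmu grad_pt lt_min mt_min.
have st : dot (Mh *m f) (p - pt)
    + dot (Kh^T *m pt + l - Mh *m yd) (Mi *m (Kh^T *m (p - pt)))
    + alpha^-1 * dot (Mh *m pt - m) (Mi *m (Mh *m (p - pt))) = dot dp (p - pt).
  by rewrite -dot_gradp grad_pt.
have L := lstep_variational flt flam lt_min.
have Mu := mstep_variational fmt fmu mt_min.
have E1 := Phi_expand pt l m p lam mu.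
have E2 := Phi_expand pt l m pt lt mt.
rewrite subrr !mulmx0 !add0r qfN dot0r mulmxN dotNr in E2.
rewrite [Mi *m (_ + _)]mulmxDr [Mi *m (_ - (mu - m))]mulmxBr in E1.
rewrite [dot _ (Mi *m _ + _)]dotDr [dot _ (Mi *m _ - _)]dotBr in E1.
set r1 := Kh^T *m pt + l - Mh *m yd in st L E1 E2.
set r2 := Mh *m pt - m in st Mu E1 E2.
have inv2alpha : 1 / (2 * alpha) = alpha^-1 / 2 by field; exact: alpha_neq0.
rewrite inv2alpha in E1 E2.
rewrite (Snorm_split l lt lam m mt mu) /Snorm.
set ia := alpha^-1 in st Mu E1 E2 inv2alpha *.
have ia_ge0 : 0 <= ia by rewrite /ia invr_ge0 ltW.
have q1 := qf_Mi_ge0 (Kh^T *m (p - pt) + (lam - l)).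
have q2 : 0 <= ia * qf Mi (Mh *m (p - pt) - (mu - m)) by rewrite mulr_ge0 ?qf_Mi_ge0.
have b1 := sigma_majorizes (lt - l).
have b2 : ia * qf Mi (mt - m) <= ia * (cn * qf Wi (mt - m)).
  by apply: ler_wpM2l; last exact: cn_majorizes.
have d1 : dot r1 (Mi *m (lam - l)) = dot r1 (Mi *m (lt - l)) + dot r1 (Mi *m (lam - lt)).
  by rewrite -(subrKA lt lam (- l)) mulmxDr dotDr addrC.
have d2 : dot r2 (Mi *m (mu - m)) = dot r2 (Mi *m (mt - m)) + dot r2 (Mi *m (mu - mt)).
  by rewrite -(subrKA mt mu (- m)) mulmxDr dotDr addrC.
have ep1 : dot dp (pt - p) = - dot dp (p - pt) by rewrite !dotBr; ring.
have ep2 : dot dl (lt - lam) = - dot dl (lam - lt) by rewrite !dotBr; ring.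
have ep3 : dot dm (mt - mu) = - dot dm (mu - mt) by rewrite !dotBr; ring.
rewrite /Fval ep1 ep2 ep3.
move: E1 E2 st L Mu; rewrite d1 d2 => E1 E2 st L Mu.
nra.
Qed.

Definition Fext p l m : \bar R := ((Phi p l m)%:E + supp C l + supp S m)%E.

Lemma Fext_fin p l m : finsupp C l -> finsupp S m -> Fext p l m = (Fval p l m)%:E.
Proof. by move=> fl fm; rewrite /Fext fl fm -!EFinD. Qed.

Variables (pt lt mt l m dp dl dm : nat -> 'cV[R]_N) (pstar lstar mstar : 'cV[R]_N).
Hypotheses (l1_init : l 1%N = lt 0%N) (m1_init : m 1%N = mt 0%N).
Hypotheses (l1_dom : l 1%N \in supp_dom C) (m1_dom : m 1%N \in supp_dom S).
Hypothesis p_step : forall k, (1 <= k)%N -> forall q,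
  dot (Mh *m f) (pt k) + phi Kh Mh yd alpha (pt k) (l k) (m k) - dot (dp k) (pt k)
  <= dot (Mh *m f) q + phi Kh Mh yd alpha q (l k) (m k) - dot (dp k) q.
Hypothesis l_step : forall k, (1 <= k)%N -> forall q,
  (supp C (lt k) + (lsub_obj (pt k) (l k) (dl k) (lt k))%:E
   <= supp C q + (lsub_obj (pt k) (l k) (dl k) q)%:E)%E.
Hypothesis m_step : forall k, (1 <= k)%N -> forall q,
  (supp S (mt k) + (msub_obj (pt k) (m k) (dm k) (mt k))%:E
   <= supp S q + (msub_obj (pt k) (m k) (dm k) q)%:E)%E.
Hypothesis l_extrapolation : forall k, (1 <= k)%N ->
  l k.+1 = lt k + betak k *: (lt k - lt k.-1).
Hypothesis m_extrapolation : forall k, (1 <= k)%N ->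
  m k.+1 = mt k + betak k *: (mt k - mt k.-1).
Hypothesis star_min : forall p' l' m', (Fext pstar lstar mstar <= Fext p' l' m')%E.

Lemma lt_finsupp k : finsupp C (lt k).
Proof.
have flt0 : finsupp C (lt 0%N).
  by rewrite -l1_init; move: l1_dom; rewrite in_setE; exact: finsupp_lt C_c0.
by case: k => [//|k]; exact: finsupp_le C_c0 flt0 (l_step _ (ltn0Sn k) (lt 0%N)).
Qed.

Lemma mt_finsupp k : finsupp S (mt k).
Proof.
have fmt0 : finsupp S (mt 0%N).
  by rewrite -m1_init; move: m1_dom; rewrite in_setE; exact: finsupp_lt S_s0.
by case: k => [//|k]; exact: finsupp_le S_s0 fmt0 (m_step _ (ltn0Sn k) (mt 0%N)).
Qed.

Lemma star_finsupp : finsupp C lstar /\ finsupp S mstar.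
Proof.
have := star_min pstar (lt 0%N) (mt 0%N).
by rewrite (Fext_fin _ _ _ (lt_finsupp _) (mt_finsupp _)); exact: finsupp_of_sum_le C_c0 S_s0.
Qed.

Definition Fstar := Fval pstar lstar mstar.

Lemma Fstar_le p' l' m' : finsupp C l' -> finsupp S m' -> Fstar <= Fval p' l' m'.
Proof.
move=> fl fm; have [fls fms] := star_finsupp.
by have := star_min p' l' m'; rewrite !Fext_fin // lee_fin.
Qed.

Lemma gradp_pt k : (1 <= k)%N -> gradp (pt k) (l k) (m k) = dp k.
Proof. by move=> k_ge1; exact: argmin_p_gradp (p_step _ k_ge1). Qed.

Lemma gradp_star : gradp pstar lstar mstar = 0.
Proof.
have [fls fms] := star_finsupp.
apply: argmin_p_gradp => q; rewrite !dot0l !subr0.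
by have := Fstar_le q _ _ fls fms; rewrite /Fstar /Fval /Phi; lra.
Qed.

Definition phat j := pmin (lt j) (mt j).
Definition pdev k := tk k *: pt k - (tk k - 1) *: phat k.-1 - pstar.
Definition ldev k := tk k *: lt k - (tk k - 1) *: lt k.-1 - lstar.
Definition mdev k := tk k *: mt k - (tk k - 1) *: mt k.-1 - mstar.
Definition Uk k := Snorm (ldev k) (mdev k).
Definition err_term k := dot (dp k) (pdev k) + dot (dl k) (ldev k) + dot (dm k) (mdev k).

Lemma ldev_succ j : tk j.+1 *: l j.+1 - (tk j.+1 - 1) *: lt j - lstar = ldev j.
Proof. exact: extrapolation_comb l1_init l_extrapolation j. Qed.

Lemma mdev_succ j : tk j.+1 *: m j.+1 - (tk j.+1 - 1) *: mt j - mstar = mdev j.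
Proof. exact: extrapolation_comb m1_init m_extrapolation j. Qed.

Lemma lyapunov_step j :
  tk j.+1 ^+ 2 * (Fval (pt j.+1) (lt j.+1) (mt j.+1) - Fstar) + Uk j.+1 / 2
  <= (tk j.+1 ^+ 2 - tk j.+1) * (Fval (phat j) (lt j) (mt j) - Fstar) + Uk j / 2
     + tk j.+1 * err_term j.+1.
Proof.
have t_gt0 : 0 < tk j.+1 :> R := lt_le_trans ltr01 (tk_ge1 _).
have t_neq0 := tk_neq0 (R := R) j.+1.
have s_ge0 : 0 <= (tk j.+1)^-1 :> R by rewrite invr_ge0 ltW.
have s_le1 : (tk j.+1)^-1 <= 1 :> R by rewrite invf_le1 // tk_ge1.
have [fls fms] := star_finsupp.
have [fyl fym Fconv] := Fval_convex pstar lstar mstar (phat j) (lt j) (mt j) _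
  fls fms (lt_finsupp j) (mt_finsupp j) s_ge0 s_le1.
rewrite /Fstar; apply: (scaled_step_le t_gt0 _ Fconv).
have := step_inequality ((tk j.+1)^-1 *: pstar + (1 - (tk j.+1)^-1) *: phat j) _ _
  (lt_finsupp j.+1) (mt_finsupp j.+1) fyl fym (gradp_pt _ (ltn0Sn j))
  (l_step _ (ltn0Sn j)) (m_step _ (ltn0Sn j)).
rewrite -[pt j.+1 - _]opprB -[lt j.+1 - _]opprB -[mt j.+1 - _]opprB.
rewrite !convex_comb_sub // ldev_succ mdev_succ !SnormZ sqrrN !scaleNr !opprK.
rewrite !dotZr -/(ldev j.+1) -/(mdev j.+1) -/(pdev j.+1) /Uk /err_term.
lra.
Qed.

Lemma hessp_pdev j :
  hessp *m pdev j.+1 = tk j.+1 *: dp j.+1 - Kh *m Mi *m ldev j + alpha^-1 *: mdev j.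
Proof.
have := hessp_combination (tk j.+1) (gradp_pt _ (ltn0Sn j)) (gradp_pmin (lt j) (mt j))
  gradp_star.
by rewrite ldev_succ mdev_succ.
Qed.

Variables (eps : nat -> R) (cM cW : R).
Hypotheses (cn_gt0 : 0 < cn) (cM_gt0 : 0 < cM) (cW_ge0 : 0 <= cW).
Hypothesis mass_coercive : forall x, dot x x <= cM * qf Mh x.
Hypothesis Wi_coercive : forall x, dot x x <= cW * qf Wi x.
Hypothesis eps_ge0 : forall k, 0 <= eps k.
Hypothesis err_le : forall k, (1 <= k)%N ->
  enorm (dp k) <= eps k /\ enorm (dl k) <= eps k /\ enorm (dm k) <= eps k.
Hypothesis eps_summable : cvg (series (fun k => k%:R * eps k) @ \oo).

Definition sqrtU k := Num.sqrt (Uk k).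
Definition teps k := tk k * eps k.

Let cl := 1 + sigma^-1.
Let cm := 1 + cW * alpha / cn.
Let cA := (alpha * cM)^-1.
Let c2 := mx_abs_sum (Kh *m Mi) * cl + alpha^-1 * N%:R * cm.
Let Cb := N%:R * (cA^-1 * N%:R + cA^-1 * c2 + cl + cm).

Lemma sqrtU_ge0 k : 0 <= sqrtU k.
Proof. exact: sqrtr_ge0. Qed.

Lemma sqr_sqrtU k : sqrtU k ^+ 2 = Uk k.
Proof. by rewrite /sqrtU sqr_sqrtr // Snorm_ge0. Qed.

Lemma teps_ge0 k : 0 <= teps k.
Proof. by rewrite /teps mulr_ge0 // (le_trans ler01 (tk_ge1 k)). Qed.

Lemma error_consts_ge0 : [/\ 0 <= cl, 0 <= cm, 0 < cA, 0 <= c2 & 0 <= Cb].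
Proof.
have cl_ge0 : 0 <= cl by rewrite /cl addr_ge0 // invr_ge0 ltW.
have cm_ge0 : 0 <= cm by rewrite /cm addr_ge0 // divr_ge0 ?mulr_ge0 // ltW.
have cA_gt0 : 0 < cA by rewrite /cA invr_gt0 mulr_gt0.
have c2_ge0 : 0 <= c2.
  by rewrite /c2 addr_ge0 ?mulr_ge0 ?mx_abs_sum_ge0 // invr_ge0 ltW.
have cAi_ge0 : 0 <= cA^-1 by rewrite invr_ge0 ltW.
split => //; rewrite /Cb; apply: mulr_ge0; first exact: ler0n.
by do 3 apply: addr_ge0 => //; apply: mulr_ge0 => //; exact: ler0n.
Qed.

Lemma ldev_bound k : enorm (ldev k) <= cl * sqrtU k.
Proof.
rewrite /cl; apply: le_mul_of_sqr_le; rewrite ?enorm_ge0 ?sqrtU_ge0 ?invr_ge0 ?sigma_ge0 //.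
by rewrite sqr_enorm sqr_sqrtU ler_pdivlMl // Snorm_ge_l.
Qed.

Lemma mdev_bound k : enorm (mdev k) <= cm * sqrtU k.
Proof.
rewrite /cm; apply: le_mul_of_sqr_le; rewrite ?enorm_ge0 ?sqrtU_ge0 //.
  by rewrite divr_ge0 ?mulr_ge0 // ltW.
rewrite sqr_enorm sqr_sqrtU; apply: le_trans (Wi_coercive _) _.
rewrite -!mulrA; apply: ler_wpM2l => //.
by rewrite mulrA -ler_pdivrMl ?divr_gt0 // invf_div Snorm_ge_m.
Qed.

Lemma coupling_le j d :
  - dot d (Kh *m Mi *m ldev j) + alpha^-1 * dot (mdev j) d <= enorm d * (c2 * sqrtU j).
Proof.
have [cl_ge0 cm_ge0 _ _ _] := error_consts_ge0.
have K_le : - dot d (Kh *m Mi *m ldev j)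
    <= mx_abs_sum (Kh *m Mi) * enorm d * (cl * sqrtU j).
  apply: le_trans (_ : _ <= `|dot d (Kh *m Mi *m ldev j)|) _.
    by rewrite -normrN ler_norm.
  apply: le_trans (normr_dot_mulmx_le _ _ _) _; apply: ler_wpM2l.
    by rewrite mulr_ge0 ?mx_abs_sum_ge0 ?enorm_ge0.
  exact: ldev_bound.
have W_le : alpha^-1 * dot (mdev j) d <= alpha^-1 * (N%:R * (cm * sqrtU j) * enorm d).
  apply: ler_wpM2l; first by rewrite invr_ge0 ltW.
  apply: le_trans (ler_norm _) (le_trans (normr_dot_le _ _) _).
  by apply: ler_wpM2r; [exact: enorm_ge0 | apply: ler_wpM2l; [exact: ler0n | exact: mdev_bound]].
have -> : enorm d * (c2 * sqrtU j) = mx_abs_sum (Kh *m Mi) * enorm d * (cl * sqrtU j)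
    + alpha^-1 * (N%:R * (cm * sqrtU j) * enorm d) by rewrite /c2; ring.
exact: lerD.
Qed.

Lemma pdev_bound j : enorm (pdev j.+1) <= cA^-1 * (N%:R * teps j.+1 + c2 * sqrtU j).
Proof.
have [_ _ cA_gt0 c2_ge0 _] := error_consts_ge0.
set d := pdev j.+1.
have coercive : cA * enorm d ^+ 2 <= qf hessp d.
  apply: le_trans (qf_hessp_ge d); rewrite sqr_enorm /cA invfM -mulrA.
  apply: ler_wpM2l; first by rewrite invr_ge0 ltW.
  by rewrite ler_pdivrMl // mass_coercive.
have [dp_le _] := err_le _ (ltn0Sn j).
have dp_dot := scaled_dot_le d (le_trans ler01 (tk_ge1 j.+1)) dp_le.
apply: le_div_of_sqr_le; rewrite ?enorm_ge0 //.
  by apply: addr_ge0; apply: mulr_ge0; rewrite ?ler0n ?teps_ge0 ?sqrtU_ge0.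
apply: le_trans coercive _.
rewrite qfE hessp_pdev dotDr dotBr !dotZr (dotC d (dp _)) (dotC d (mdev _)).
have := coupling_le j d; rewrite /teps; nra.
Qed.

Lemma err_term_bound j :
  tk j.+1 * err_term j.+1 <= Cb * teps j.+1 * (teps j.+1 + sqrtU j + sqrtU j.+1).
Proof.
have [cl_ge0 cm_ge0 cA_gt0 c2_ge0 _] := error_consts_ge0.
have t_ge0 : 0 <= tk j.+1 :> R := le_trans ler01 (tk_ge1 _).
have [dp_le [dl_le dm_le]] := err_le _ (ltn0Sn j).
have T1 := scaled_dot_le (pdev j.+1) t_ge0 dp_le.
have T2 := scaled_dot_le (ldev j.+1) t_ge0 dl_le.
have T3 := scaled_dot_le (mdev j.+1) t_ge0 dm_le.
rewrite -/(teps j.+1) in T1 T2 T3.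
have Nteps_ge0 : 0 <= N%:R * teps j.+1 by rewrite mulr_ge0 ?teps_ge0.
have b1 := ler_wpM2l Nteps_ge0 (pdev_bound j).
have b2 := ler_wpM2l Nteps_ge0 (ldev_bound j.+1).
have b3 := ler_wpM2l Nteps_ge0 (mdev_bound j.+1).
have rest_ge0 : 0 <= N%:R * teps j.+1 * (cA^-1 * N%:R * (sqrtU j + sqrtU j.+1)
    + cA^-1 * c2 * (teps j.+1 + sqrtU j.+1) + (cl + cm) * (teps j.+1 + sqrtU j)).
  have := sqrtU_ge0 j; have := sqrtU_ge0 j.+1; have := teps_ge0 j.+1.
  have : 0 <= cA^-1 by rewrite invr_ge0 ltW.
  move=> cAi_ge0 te_ge0 a1_ge0 a0_ge0.
  by rewrite mulr_ge0 // !addr_ge0 // !mulr_ge0 // addr_ge0.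
have -> : Cb * teps j.+1 * (teps j.+1 + sqrtU j + sqrtU j.+1) =
   N%:R * teps j.+1 * (cA^-1 * (N%:R * teps j.+1 + c2 * sqrtU j))
   + N%:R * teps j.+1 * (cl * sqrtU j.+1) + N%:R * teps j.+1 * (cm * sqrtU j.+1)
   + N%:R * teps j.+1 * (cA^-1 * N%:R * (sqrtU j + sqrtU j.+1)
     + cA^-1 * c2 * (teps j.+1 + sqrtU j.+1) + (cl + cm) * (teps j.+1 + sqrtU j)).
  by rewrite /Cb; ring.
rewrite /err_term [tk j.+1 * _]mulrDr [tk j.+1 * (_ + _)]mulrDr; lra.
Qed.

Definition energy k := (if k is j.+1 then tk k ^+ 2 * (Fval (pt k) (lt k) (mt k) - Fstar)
  else 0) + Uk k / 2.

Lemma energy_succ_le j :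
  energy j.+1 <= energy j + Cb * teps j.+1 * (teps j.+1 + sqrtU j + sqrtU j.+1).
Proof.
have := lyapunov_step j; have := err_term_bound j.
have : (tk j.+1 ^+ 2 - tk j.+1) * (Fval (phat j) (lt j) (mt j) - Fstar)
       <= (if j is i.+1 then tk j ^+ 2 * (Fval (pt j) (lt j) (mt j) - Fstar) else 0).
  case: j => [|i]; first by rewrite /tk /= expr1n subrr mul0r.
  rewrite /tk /= tacc_sqr_succ ler_wpM2l ?sqr_ge0 // lerD2r /Fval !lerD2r.
  exact: Phi_pmin_le.
rewrite /energy; case: j => [|i] /=; lra.
Qed.

Lemma energy_ge k : sqrtU k ^+ 2 / 2 <= energy k.
Proof.
rewrite /energy sqr_sqrtU lerDr; case: k => [//|k].
apply: mulr_ge0; first exact: sqr_ge0.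
by rewrite subr_ge0 Fstar_le //; [exact: lt_finsupp | exact: mt_finsupp].
Qed.

Lemma teps_sum_le k :
  \sum_(1 <= j < k.+1) teps j <= limn (series (fun k => k%:R * eps k)).
Proof.
apply: (@le_trans _ _ (\sum_(1 <= j < k.+1) j%:R * eps j)).
  apply: ler_sum_nat => i /andP [i_ge1 _]; rewrite /teps ler_wpM2r //.
  by case: i i_ge1 => [//|i] _; exact: tacc_le.
have -> : \sum_(1 <= j < k.+1) j%:R * eps j = series (fun k => k%:R * eps k) k.+1.
  by rewrite /series /= (big_ltn (ltn0Sn k)) mul0r add0r.
apply: nondecreasing_cvgn_le; last exact: eps_summable.
move=> n1 n2 n12.
rewrite /series /= (big_cat_nat (leq0n n1) n12) /= lerDl.
by apply: sumr_ge0 => i _; rewrite mulr_ge0.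
Qed.

(* With [t_k >= (k + 1) / 2], a bounded energy gives the O(1/k^2) rate. *)
Theorem inexact_abcd_rate : exists Eb, forall k, (1 <= k)%N ->
  (Fext (pt k) (lt k) (mt k) - Fext pstar lstar mstar <= (4 * Eb / k.+1%:R ^+ 2)%:E)%E.
Proof.
have [_ _ _ _ Cb_ge0] := error_consts_ge0.
have [Eb Eb_ge] := perturbed_descent_bounded _ _ _ _ _ Cb_ge0 teps_ge0 sqrtU_ge0 teps_sum_le
  energy_succ_le energy_ge.
exists Eb => -[//|j] _; have [fls fms] := star_finsupp.
rewrite (Fext_fin _ _ _ (lt_finsupp _) (mt_finsupp _)) (Fext_fin _ _ _ fls fms).
rewrite -EFinB lee_fin -/Fstar.
have F_ge : 0 <= Fval (pt j.+1) (lt j.+1) (mt j.+1) - Fstar.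
  by rewrite subr_ge0 Fstar_le //; [exact: lt_finsupp | exact: mt_finsupp].
have E_le := Eb_ge j.+1; have U_ge0 : 0 <= Uk j.+1 := Snorm_ge0 _ _.
have T_le : j.+2%:R <= 2 * tk j.+1 :> R by have := tacc_ge (R := R) j; rewrite /tk /=; lra.
have T2_le : j.+2%:R ^+ 2 <= 4 * tk j.+1 ^+ 2 :> R.
  have : j.+2%:R ^+ 2 <= (2 * tk j.+1) ^+ 2 :> R.
    by have t_ge1 := tk_ge1 (R := R) j.+1; rewrite ler_sqr ?nnegrE ?ler0n //; lra.
  by rewrite exprMn [2 ^+ 2]expr2 -natrM.
rewrite ler_pdivlMr ?exprn_gt0 ?ltr0n //.
have := ler_wpM2l F_ge T2_le; rewrite /energy -/(Uk j.+1) in E_le.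
nra.
Qed.

End InexactABCD.

Section ConstraintSets.
Context {R : realType} {N : nat}.

Lemma ellC_0 (D : 'M[R]_N) {del : R} : 0 <= del -> ellC D del 0.
Proof. by rewrite /ellC /= qfE mulmx0 dot0r. Qed.

Lemma boxS_const {a b : R} : a <= b -> boxS a b (const_mx a : 'cV[R]_N).
Proof. by move=> a_le_b i; rewrite mxE lexx. Qed.

Lemma FobjE (Kh Mh Dh : 'M[R]_N) yd f alpha del a b p l m :
  Fobj Kh Mh Dh yd f alpha del a b p l m
  = Fext Kh Mh yd f alpha (ellC Dh del) (boxS a b) p l m.
Proof. by rewrite /Fobj /Fext /Phi [phi _ _ _ _ _ _ _ + _]addrC. Qed.

End ConstraintSets.

Theorem theorem7 (R : realType) (N n : nat) (Kh Mh Wh Dh : 'M[R]_N)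
  (yd f : 'cV[R]_N) (alpha del a b cn omega_m sigma : R) (w : 'rV[R]_N)
  (eps : nat -> R)
  (pt lt mt p l m dp dl dm : nat -> 'cV[R]_N)
  (pstar lstar mstar : 'cV[R]_N) :
  (* problem data *)
  (n = 2 \/ n = 3)%N ->
  cn = (if n == 2%N then 4 else 5) ->
  symmx Kh -> posdef Kh ->
  symmx Mh -> posdef Mh ->
  symmx Dh -> posdef Dh ->
  Wh = diag_mx w -> (forall i, 0 < w 0 i) ->
  (forall z, qf Mh z <= qf Wh z /\ qf Wh z <= cn * qf Mh z) ->
  (exists i0, (forall i, w 0 i0 <= w 0 i) /\ omega_m = (w 0 i0)^-1) ->
  sigma = cn * omega_m ->
  0 < alpha -> 0 < del -> a <= b ->
  (* tolerances *)
  (forall k, 0 <= eps k) ->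
  cvg (series (fun k => k%:R * eps k) @ \oo) ->
  (* input *)
  p 1%N = pt 0%N -> l 1%N = lt 0%N -> m 1%N = mt 0%N ->
  l 1%N \in supp_dom (ellC Dh del) -> m 1%N \in supp_dom (boxS a b) ->
  (* Step 1 *)
  (forall k, (1 <= k)%N ->
     enorm (dp k) <= eps k /\ enorm (dl k) <= eps k /\ enorm (dm k) <= eps k) ->
  (forall k, (1 <= k)%N -> forall q : 'cV[R]_N,
     dot (Mh *m f) (pt k) + phi Kh Mh yd alpha (pt k) (l k) (m k) - dot (dp k) (pt k)
     <= dot (Mh *m f) q + phi Kh Mh yd alpha q (l k) (m k) - dot (dp k) q) ->
  (forall k, (1 <= k)%N -> forall q : 'cV[R]_N,
     (supp (ellC Dh del) (lt k)
      + (1/2 * qf (invmx Mh) (lt k - Mh *m yd + Kh^T *m pt k)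
         + 1/2 * qf (sigma%:M - invmx Mh) (lt k - l k)
         - dot (dl k) (lt k))%:E
     <= supp (ellC Dh del) q
      + (1/2 * qf (invmx Mh) (q - Mh *m yd + Kh^T *m pt k)
         + 1/2 * qf (sigma%:M - invmx Mh) (q - l k)
         - dot (dl k) q)%:E)%E) ->
  (forall k, (1 <= k)%N -> forall q : 'cV[R]_N,
     (supp (boxS a b) (mt k)
      + (1/(2 * alpha) * qf (invmx Mh) (mt k - Mh *m pt k)
         + 1/(2 * alpha) * qf (cn *: invmx Wh - invmx Mh) (mt k - m k)
         - dot (dm k) (mt k))%:E
     <= supp (boxS a b) q
      + (1/(2 * alpha) * qf (invmx Mh) (q - Mh *m pt k)
         + 1/(2 * alpha) * qf (cn *: invmx Wh - invmx Mh) (q - m k)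
         - dot (dm k) q)%:E)%E) ->
  (* Step 2 *)
  (forall k, (1 <= k)%N ->
     p k.+1 = pt k + betak k *: (pt k - pt k.-1) /\
     l k.+1 = lt k + betak k *: (lt k - lt k.-1) /\
     m k.+1 = mt k + betak k *: (mt k - mt k.-1)) ->
  (* z* minimizes F *)
  (forall q1 q2 q3 : 'cV[R]_N,
     (Fobj Kh Mh Dh yd f alpha del a b pstar lstar mstar
      <= Fobj Kh Mh Dh yd f alpha del a b q1 q2 q3)%E) ->
  exists c0 : R, forall k, (1 <= k)%N ->
    (Fobj Kh Mh Dh yd f alpha del a b (pt k) (lt k) (mt k)
     - Fobj Kh Mh Dh yd f alpha del a b pstar lstar mstar
     <= ((2 * (qf 0 (pt 0%N - pstar)
               + qf ((sigma%:M - invmx Mh) + invmx Mh) (lt 0%N - lstar)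
               + qf (alpha^-1 *: (cn *: invmx Wh - invmx Mh) + alpha^-1 *: invmx Mh)
                    (mt 0%N - mstar))
          + c0) / (k.+1)%:R ^+ 2)%:E)%E.
Proof.
move=> _ cn_def _ _ sM pdM _ _ Wh_diag w_gt0 mass_lumped [i0 [w_min om_def]] sigma_def
  alpha_gt0 del_gt0 a_le_b eps_ge0 eps_summable _ l1_init m1_init l1_dom m1_dom err_le
  p_step l_step m_step extrapolation star_min.
have cn_gt0 : 0 < cn by rewrite cn_def; case: ifP.
have sigma_gt0 : 0 < sigma by rewrite sigma_def om_def mulr_gt0 ?invr_gt0.
have sigma_maj x : qf (invmx Mh) x <= sigma * dot x x.
  by rewrite sigma_def om_def (qf_invmx_mass_le_dot sM pdM cn_gt0 Wh_diag w_gt0 mass_lumped).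
have l_ext k (k_ge1 : (1 <= k)%N) := (extrapolation k k_ge1).2.1.
have m_ext k (k_ge1 : (1 <= k)%N) := (extrapolation k k_ge1).2.2.
have star_min' p' l' m' : (Fext Kh Mh yd f alpha (ellC Dh del) (boxS a b) pstar lstar mstar
    <= Fext Kh Mh yd f alpha (ellC Dh del) (boxS a b) p' l' m')%E.
  by rewrite -!FobjE.
have [Eb rate] := inexact_abcd_rate Kh Mh (invmx Wh) yd f alpha sigma cn
  (ellC Dh del) (boxS a b) 0 (const_mx a) sM pdM (symmx_invmx_lumped Wh_diag w_gt0)
  alpha_gt0 sigma_gt0 (ellC_0 Dh (ltW del_gt0)) (boxS_const a_le_b) sigma_maj
  (qf_invmx_mass_le sM pdM cn_gt0 Wh_diag w_gt0 mass_lumped)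
  pt lt mt l m dp dl dm pstar lstar mstar l1_init m1_init l1_dom m1_dom
  p_step l_step m_step l_ext m_ext star_min' eps (cn / w 0 i0) (\sum_i w 0 i)
  cn_gt0 (divr_gt0 cn_gt0 (w_gt0 i0)) (sumr_ge0 _ (fun i _ => ltW (w_gt0 i)))
  (dot_le_qf_mass Wh_diag w_gt0 mass_lumped w_min)
  (dot_le_qf_invmx_lumped Wh_diag w_gt0) eps_ge0 err_le eps_summable.
exists (4 * Eb - 2 * (qf 0 (pt 0%N - pstar)
    + qf ((sigma%:M - invmx Mh) + invmx Mh) (lt 0%N - lstar)
    + qf (alpha^-1 *: (cn *: invmx Wh - invmx Mh) + alpha^-1 *: invmx Mh) (mt 0%N - mstar))).
by move=> k k_ge1; rewrite [2 * _ + _]addrC subrK !FobjE; exact: rate.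
Qed.
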